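(* Let $\Sigma^*$ be an $n\times n$ positive definite matrix whose conditional independence structure is a tree $T^*$ on $\{1,\dots,n\}$, let $D^*$ be a diagonal matrix with nonnegative diagonal entries, and let $\Sigma^o=\Sigma^*+D^*$. Suppose $\Sigma^o=\Sigma'+D'$ where $\Sigma'$ is an $n\times n$ positive definite matrix whose conditional independence structure is a tree $T'$ and $D'$ is a diagonal matrix with nonnegative diagonal entries. Then $T'\in\mathcal{T}_{T^*}$.
   Context: For an $n\times n$ positive definite matrix $\Sigma$ with inverse $\Omega=\Sigma^{-1}$, its conditional independence structure is the graph on $\{1,\dots,n\}$ with an edge $\{i,j\}$ ($i\neq j$) iff $\Omega_{ij}\neq 0$. Let $\mathcal{L}$ be the set of leaves of $T^*$. For a subset $\mathcal{S}\subseteq\mathcal{L}$ in which no two leaves share a common neighbor, let $T^{\mathcal{S}}$ be the tree obtained from $T^*$ by exchanging the position of each leaf $a\in\mathcal{S}$ with its unique neighbor (i.e. the image of $T^*$ under the permutation of labels swapping each such leaf with its neighbor). $\mathcal{T}_{T^*}$ is the set of all trees $T^{\mathcal{S}}$ over all such subsets $\mathcal{S}$. *)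

From mathcomp Require Import all_boot all_order all_algebra all_fingroup.
From mathcomp Require Import reals.
Set Implicit Arguments. Unset Strict Implicit. Unset Printing Implicit Defensive.
Import Order.TTheory GRing.Theory Num.Theory.
Local Open Scope ring_scope.

Definition posdef (R : realType) (n : nat) (A : 'M[R]_n) : Prop :=
  A^T = A /\ forall x : 'cV[R]_n, x != 0 -> 0 < (x^T *m A *m x) 0 0.

Definition nonneg_diag (R : realType) (n : nat) (D : 'M[R]_n) : Prop :=
  is_diag_mx D /\ forall i, 0 <= D i i.

Definition ci_graph (R : realType) (n : nat) (S : 'M[R]_n) : rel 'I_n :=
  fun i j => (i != j) && (invmx S i j != 0).

Definition simple_graph (n : nat) (E : rel 'I_n) : Prop :=
  symmetric E /\ irreflexive E.

Definition graph_connected (n : nat) (E : rel 'I_n) : Prop :=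
  forall i j, connect E i j.

Definition graph_acyclic (n : nat) (E : rel 'I_n) : Prop :=
  forall p : seq 'I_n, uniq p -> (3 <= size p)%N -> ~~ path.cycle E p.

Definition is_tree (n : nat) (E : rel 'I_n) : Prop :=
  [/\ simple_graph E, graph_connected E & graph_acyclic E].

Definition is_leaf (n : nat) (E : rel 'I_n) (a : 'I_n) : bool :=
  #|[set b | E a b]| == 1%N.

(* T' belongs to the family T_{T*}: there is a set S of leaves of T*, no two of
   which share a common neighbour, and a permutation pi of the labels that swaps
   each leaf a in S with its unique neighbour and fixes all other vertices, such
   that T' is the image of T* under pi. *)
Definition in_swap_family (n : nat) (Tstar T' : rel 'I_n) : Prop :=
  exists S : {set 'I_n},
    [/\ (forall a, a \in S -> is_leaf Tstar a),
        (forall a a' c, a \in S -> a' \in S -> a != a' -> Tstar a c -> ~~ Tstar a' c)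
      & exists pi : {perm 'I_n},
        [/\ (forall a b, a \in S -> Tstar a b -> pi a = b /\ pi b = a),
            (forall v, v \notin S -> (forall a, a \in S -> ~~ Tstar a v) -> pi v = v)
          & (forall i j, T' (pi i) (pi j) = Tstar i j)]].

From mathcomp Require Import all_boot all_order all_algebra all_fingroup.
From mathcomp Require Import reals ring.
Set Implicit Arguments. Unset Strict Implicit. Unset Printing Implicit Defensive.
Import Order.TTheory GRing.Theory Num.Theory.
Local Open Scope ring_scope.

(* For a positive definite [S] whose conditional independence graph is a tree
   [T], and distinct [u], [v], [z], the partial covariance of [u] and [v] given
   [z] vanishes exactly when [z] separates [u] from [v] in [T]; otherwise the
   ratio [S u z * S z v / (S u v * S z z)] lies strictly between 0 and 1.  So
   [T] is determined by the off-diagonal entries of [S] together with its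
   diagonal entries at cut vertices.  If [S1 + D1 = S2 + D2], the matrices agree
   off the diagonal, and a cut vertex [z] of [T1] has [S1 z z <= S2 z z]; hence
   the diagonals agree at common cut vertices.  A leaf [b] of [T1] that is a cut
   vertex of [T2] has a neighbour [p] that is a cut vertex of [T1] and a leaf of
   [T2] attached to [b]; exchanging every such pair [b], [p] maps the separation
   relation of [T1], hence [T1] itself, onto [T2]. *)

Lemma connect_preserved (T : finType) (e : rel T) (P : {pred T}) x y :
  x \in P -> (forall a b, a \in P -> e a b -> b \in P) -> connect e x y -> y \in P.
Proof.
move=> Px step /connectP [p pth ->]; elim: p x Px pth => //= a p IH x Px.
by case/andP=> exa pa; apply: IH (step _ _ Px exa) pa.
Qed.

Section Tree.
Variables (n : nat) (e : rel 'I_n).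
Hypothesis tree_e : is_tree e.

Let e_sym : symmetric e. Proof. by case: tree_e => [[]]. Qed.
Let e_irr : irreflexive e. Proof. by case: tree_e => [[]]. Qed.

Definition avoid (z : 'I_n) : rel 'I_n := [rel x y | [&& e x y, x != z & y != z]].

Definition branch z u : {set 'I_n} := [set x | connect (avoid z) u x].

Lemma avoidW z : subrel (avoid z) e.
Proof. by move=> x y /and3P[]. Qed.

Lemma connect_avoid_sym z : connect_sym (avoid z).
Proof.
apply: sym_connect_sym => x y; rewrite /avoid /= e_sym.
by case: (x != z); case: (y != z); rewrite ?andbF.
Qed.

Lemma branch_refl z u : u \in branch z u.
Proof. by rewrite inE connect0. Qed.

Lemma branch_avoid z u x : u != z -> x \in branch z u -> x != z.
Proof.
move=> uz; rewrite inE => ux.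
by apply: (connect_preserved (P := [pred w | w != z])) ux => // a b _ /and3P[].
Qed.

Lemma branch_step z u a b :
  a \in branch z u -> e a b -> a != z -> b != z -> b \in branch z u.
Proof.
rewrite !inE => ua eab az bz; apply: connect_trans ua (connect1 _).
by rewrite /avoid /= eab az bz.
Qed.

Lemma branch_nbr z u : u != z -> exists2 m, e z m & m \in branch z u.
Proof.
move=> uz; case: (boolP [exists m, e z m && (m \in branch z u)]).
  by case/existsP=> m /andP[]; exists m.
move=> /existsPn no_nbr; suff /(branch_avoid uz) : z \in branch z u by rewrite eqxx.
case: tree_e => _ /(_ u z) + _.
apply: connect_preserved (branch_refl z u) _ => a b ain eab.
have az := branch_avoid uz ain.
case: (eqVneq b z) => [bz | bz]; last exact: branch_step eab az bz.
by move: (no_nbr a); rewrite ain andbT e_sym -bz eab.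
Qed.

Lemma path_avoid_notin z x p : path (avoid z) x p -> z \notin p.
Proof.
by elim: p x => //= a p IH x /andP[/and3P[_ _ az] /IH]; rewrite inE negb_or eq_sym az.
Qed.

Lemma branch_nbr_uniq z u m m' :
  e z m -> e z m' -> m \in branch z u -> m' \in branch z u -> m = m'.
Proof.
move=> ezm ezm' mu m'u; apply/eqP; apply: contraT => mm'.
have mz : m != z by apply: contraTneq ezm => ->; rewrite e_irr.
have /connectP[p pth] : connect (avoid z) m m'.
  by move: mu m'u; rewrite !inE connect_avoid_sym; apply: connect_trans.
case: (shortenP pth) => {}p {}pth uq _ lst.
have p_nil : p != [::] by apply: contraNneq mm' => p0; rewrite lst p0.
have cyc : path.cycle e [:: z, m & p].
  by rewrite /= ezm rcons_path (sub_path (@avoidW z) pth) -lst e_sym ezm'.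
have uniq_zmp : uniq [:: z, m & p].
  by rewrite cons_uniq uq andbT inE negb_or eq_sym mz (path_avoid_notin pth).
case: tree_e => _ _ /(_ _ uniq_zmp); rewrite cyc; apply.
by rewrite /= !ltnS lt0n size_eq0.
Qed.

Section NestedBranch.
Variables (z u m : 'I_n).
Hypotheses (uz : u != z) (ezm : e z m) (mu : m \in branch z u).

Lemma branch_nested x : x \in branch z u -> x != m -> branch m x \subset branch z u :\ m.
Proof.
move=> xu xm; apply/subsetP => y; rewrite inE.
apply: connect_preserved; first by rewrite in_setD1 xm.
move=> a b; rewrite !in_setD1 => /andP[am au] /and3P[eab _ bm]; rewrite bm.
have az := branch_avoid uz au.
case: (eqVneq b z) => [bz | bz]; last exact: branch_step eab az bz.
by move: eab; rewrite bz e_sym => /branch_nbr_uniq/(_ ezm au mu) am'; rewrite am' eqxx in am.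
Qed.

Lemma branch_nested_card x : x \in branch z u -> x != m ->
  (#|branch m x| < #|branch z u|)%N.
Proof.
move=> xu xm; apply: leq_ltn_trans (subset_leq_card (branch_nested xu xm)) _.
by rewrite [X in (_ < X)%N](cardsD1 m) mu.
Qed.

Lemma branch_nested_sep x : x \in branch z u -> x != m -> ~~ connect (avoid m) x z.
Proof.
move=> xu xm; apply/negP => xz.
have /(subsetP (branch_nested xu xm)) : z \in branch m x by rewrite inE.
by rewrite in_setD1 => /andP[_ /(branch_avoid uz)]; rewrite eqxx.
Qed.

End NestedBranch.

Lemma leaf_not_separating z p u v :
  (forall y, e z y -> y = p) -> u != z -> v != z -> connect (avoid z) u v.
Proof.
move=> leaf_z uz vz.
case: (branch_nbr uz) => _ /leaf_z -> pu; case: (branch_nbr vz) => _ /leaf_z -> pv.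
by move: pu pv; rewrite !inE => up vp; rewrite (connect_trans up) // connect_avoid_sym.
Qed.

Lemma nbrs_separated z x y : e z x -> e z y -> x != y -> ~~ connect (avoid z) x y.
Proof.
move=> ezx ezy; apply: contraNN => xy.
apply/eqP/(branch_nbr_uniq ezx ezy (branch_refl z x)); by rewrite inE.
Qed.

Lemma leaf_isolated z p y : (forall y, e z y -> y = p) -> connect (avoid p) z y -> y = z.
Proof.
move=> leaf_z zy; apply/eqP; apply: (connect_preserved (P := pred1 z)) zy; first exact: eqxx.
by move=> a b /eqP-> /and3P[/leaf_z-> _]; rewrite eqxx.
Qed.

Lemma nonedge_separated u v : u != v -> ~~ e u v ->
  exists z, [/\ z != u, z != v & ~~ connect (avoid z) u v].
Proof.
move=> uv neuv; case: (branch_nbr uv) => m evm mu.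
have mu' : m != u by apply: contraNneq neuv => <-; rewrite e_sym.
have mv : m != v by apply: contraTneq evm => ->; rewrite e_irr.
exists m; split => //; apply/negP => uv_conn.
have /(subsetP (branch_nested uv evm mu (branch_refl v u) _)) : v \in branch m u.
  by rewrite inE.
by rewrite eq_sym mu' in_setD1 => /(_ isT) /andP[_ /(branch_avoid uv)]; rewrite eqxx.
Qed.

End Tree.

Section PosDef.
Variables (R : realType) (n : nat).

Lemma sum_mul_delta (f : 'I_n -> R) i : \sum_j f j * (j == i)%:R = f i.
Proof.
by rewrite (bigD1 i) //= eqxx mulr1 big1 ?addr0 // => j /negbTE->; rewrite mulr0.
Qed.

Lemma quad_formE (A : 'M[R]_n) (x : 'cV[R]_n) :
  (x^T *m A *m x) 0 0 = \sum_i x i 0 * (A *m x) i 0.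
Proof. by rewrite -mulmxA mxE; apply: eq_bigr => i _; rewrite mxE. Qed.

Lemma posdef_vanish (A : 'M[R]_n) (w : 'cV[R]_n) : posdef A ->
  (forall a, w a 0 = 0 \/ (A *m w) a 0 = 0) -> w = 0.
Proof.
move=> [_ A_pos] w0; apply/eqP; apply: contraT => /A_pos.
rewrite quad_formE big1 ?ltxx // => a _.
by case: (w0 a) => ->; rewrite ?mul0r ?mulr0.
Qed.

Variable S : 'M[R]_n.
Hypothesis S_posdef : posdef S.

Lemma posdef_sym i j : S i j = S j i.
Proof. by case: S_posdef => S_sym _; rewrite -{1}S_sym mxE. Qed.

Lemma posdef_unit : S \in unitmx.
Proof.
apply: contraT => S_sing.
have /matrix0Pn[i [j kerS_ij]] : kermx S != 0 by rewrite kermx_eq0 row_free_unit.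
have yS0 : row i (kermx S) *m S = 0 by rewrite -row_mul mulmx_ker row0.
have y0 : (row i (kermx S))^T != 0.
  by apply/matrix0Pn; exists j, 0; rewrite !mxE in kerS_ij *.
by have := S_posdef.2 _ y0; rewrite trmxK yS0 mul0mx mxE ltxx.
Qed.

Lemma posdef_diag_gt0 i : 0 < S i i.
Proof.
pose x : 'cV[R]_n := \col_j (j == i)%:R.
have x0 : x != 0 by apply/matrix0Pn; exists i, 0; rewrite !mxE eqxx oner_neq0.
have := S_posdef.2 _ x0; rewrite quad_formE.
under eq_bigr => a _ do rewrite mxE (mulrC (_%:R)) mxE; rewrite sum_mul_delta.
by under eq_bigr => a _ do rewrite !mxE; rewrite sum_mul_delta.
Qed.

Lemma posdef_diag_neq0 i : S i i != 0.
Proof. by rewrite gt_eqF ?posdef_diag_gt0. Qed.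

Lemma posdef_sqr_lt i j : i != j -> S i j ^+ 2 < S i i * S j j.
Proof.
move=> ij.
pose x : 'cV[R]_n := \col_k ((k == i)%:R * S j j - (k == j)%:R * S i j).
have x_comb f : \sum_k f k * x k 0 = f i * S j j - f j * S i j.
  rewrite -(sum_mul_delta f i) -(sum_mul_delta f j) !mulr_suml -sumrB.
  by apply: eq_bigr => k _; rewrite mxE; ring.
have x0 : x != 0.
  apply/matrix0Pn; exists i, 0; rewrite !mxE eqxx (negbTE ij) mul0r subr0 mul1r.
  exact: posdef_diag_neq0.
have := S_posdef.2 _ x0; rewrite quad_formE.
under eq_bigr => a _ do rewrite mulrC mxE x_comb.
rewrite x_comb (posdef_sym j i).
have -> : (S i i * S j j - S i j * S i j) * S j j - (S i j * S j j - S j j * S i j) * S i j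
    = S j j * (S i i * S j j - S i j ^+ 2) by ring.
by rewrite pmulr_rgt0 ?posdef_diag_gt0 // subr_gt0.
Qed.

Lemma sum_invmx_mul a c : \sum_b invmx S a b * S b c = (a == c)%:R.
Proof. by have := congr1 (fun M : 'M[R]_n => M a c) (mulVmx posdef_unit); rewrite !mxE. Qed.

Lemma posdef_inv : posdef (invmx S).
Proof.
split=> [|w w0]; first by rewrite trmx_inv S_posdef.1.
have y0 : invmx S *m w != 0.
  by apply: contraNneq w0 => y0; rewrite -[w]mul1mx -(mulmxV posdef_unit) -mulmxA y0 mulmx0.
have := S_posdef.2 _ y0.
by rewrite trmx_mul trmx_inv S_posdef.1 !mulmxA mulmxKV ?posdef_unit.
Qed.

End PosDef.

Definition tree_cov (R : realType) (n : nat) (S : 'M[R]_n) :=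
  posdef S /\ is_tree (ci_graph S).

(* The partial covariance of [u] and [v] given [z] vanishes; for a Gaussian
   vector this is the conditional independence of [u] and [v] given [z]. *)
Definition indep_given (R : realType) (n : nat) (S : 'M[R]_n) z u v :=
  S u z * S z v == S u v * S z z.

Definition cut_vertex (R : realType) (n : nat) (S : 'M[R]_n) z :=
  [exists u, exists v, [&& u != z, v != z, u != v & indep_given S z u v]].

Section TreeCov.
Variables (R : realType) (n : nat) (S : 'M[R]_n).
Hypothesis S_tree : tree_cov S.
Let S_posdef : posdef S := S_tree.1.
Let T_tree : is_tree (ci_graph S) := S_tree.2.
Let S_sym : forall i j, S i j = S j i := posdef_sym S_posdef.
Local Notation T := (ci_graph S).
Local Notation branch := (branch T).
Local Notation avoid := (avoid T).

Lemma ci_graph_sym : symmetric T.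
Proof. by case: T_tree => [[]]. Qed.

Lemma ci_graph_neq a b : T a b -> a != b.
Proof. by case/andP. Qed.

Lemma invmx_outside_branch z u a b : u != z ->
  a \in branch z u -> b \notin branch z u -> b != z -> invmx S a b = 0.
Proof.
move=> uz au bu bz; have ab : a != b by apply: contraNneq bu => <-.
apply: contraNeq bu => Sab_neq0.
by apply: branch_step au _ (branch_avoid uz au) bz; rewrite /ci_graph ab.
Qed.

Lemma separated_factor z u v : u != z -> ~~ connect (avoid z) u v ->
  S u z * S z v = S u v * S z z.
Proof.
move=> uz uv_sep.
(* [y b] is [S z z] times the partial covariance of [b] and [v] given [z]; it
   vanishes at [z], the only vertex outside the branch of [u] that [invmx S]
   links to it, so [invmx S] maps the restriction of [y] to the branch to a
   vector vanishing on the branch, and positivity forces [y u = 0]. *)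
pose y b := S z z * S b v - S z v * S b z.
pose w : 'cV[R]_n := \col_b (if b \in branch z u then y b else 0).
suff /(congr1 (fun M : 'cV[R]_n => M u 0)) : w = 0.
  rewrite !mxE branch_refl /y => /eqP; rewrite subr_eq0 => /eqP yu0.
  by rewrite mulrC -yu0 mulrC.
apply: posdef_vanish (posdef_inv S_posdef) _ => a; rewrite !mxE.
case: ifP => au; [right | by left].
have az := branch_avoid uz au.
have av : a != v by apply: contraNneq uv_sep => <-; rewrite -inE.
transitivity (\sum_b invmx S a b * y b).
  apply: eq_bigr => b _; rewrite mxE; case: ifP => // /negbT bu.
  case: (eqVneq b z) => [-> | bz]; first by rewrite /y [S z z * _]mulrC subrr mulr0.
  by rewrite (invmx_outside_branch uz au bu bz) !mul0r.
under eq_bigr do rewrite /y mulrBr !mulrA ![invmx S a _ * S z _]mulrC -!mulrA.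
by rewrite sumrB -!mulr_sumr !(sum_invmx_mul S_posdef) (negbTE az) (negbTE av) !mulr0 subrr.
Qed.

Lemma cov_edge_neq0 u v : T u v -> S u v != 0.
Proof.
move=> Tuv; have vu : v != u by rewrite eq_sym (ci_graph_neq Tuv).
have vB := branch_refl T u v.
have only_v a : a \in branch u v -> T a u -> a = v.
  by move=> aB; rewrite ci_graph_sym => /(branch_nbr_uniq T_tree)/(_ Tuv aB vB).
apply/eqP => Suv0.
pose w : 'cV[R]_n := \col_b (if b \in branch u v then S b u else 0).
have w0 : w = 0.
  apply: posdef_vanish (posdef_inv S_posdef) _ => a; rewrite !mxE.
  case: ifP => aB; last by left.
  case: (eqVneq a v) => [-> | av]; first by left; rewrite S_sym.
  right; have au := branch_avoid vu aB.
  transitivity (\sum_b invmx S a b * S b u).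
    2: by rewrite (sum_invmx_mul S_posdef) (negbTE au).
  apply: eq_bigr => b _; rewrite mxE; case: ifP => // /negbT bB.
  case: (eqVneq b u) => [-> | bu]; last by rewrite (invmx_outside_branch vu aB bB bu) !mul0r.
  suff -> : invmx S a u = 0 by rewrite !mul0r.
  apply/eqP; apply: contraTT av => Sau_neq0; rewrite negbK; apply/eqP/only_v => //.
  by rewrite /ci_graph Sau_neq0 (branch_avoid vu aB).
have Su0 c : c \in branch u v -> S c u = 0.
  by move=> cB; have := congr1 (fun M : 'cV[R]_n => M c 0) w0; rewrite !mxE cB.
have := sum_invmx_mul S_posdef v u; rewrite (negbTE vu) (bigD1 u) //= big1 ?addr0.
  move/eqP; rewrite mulf_eq0 (negbTE (posdef_diag_neq0 S_posdef u)) orbF => /eqP Svu.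
  by move: Tuv; rewrite ci_graph_sym /ci_graph Svu eqxx andbF.
move=> c cu; case: (boolP (c \in branch u v)) => cB; first by rewrite Su0 ?mulr0.
by rewrite (invmx_outside_branch vu vB cB cu) mul0r.
Qed.

Lemma cov_neq0 u v : S u v != 0.
Proof.
case: (eqVneq u v) => [-> | uv]; first exact: posdef_diag_neq0.
have [k] := ubnP #|branch v u|; elim: k => // k IH in u v uv *; rewrite ltnS => le_k.
case: (branch_nbr T_tree uv) => m Tvm mB.
case: (eqVneq m u) => [<- | mu]; first by rewrite S_sym cov_edge_neq0.
have um : u != m by rewrite eq_sym.
have uB := branch_refl T v u.
have Sum_neq0 : S u m != 0.
  exact: (IH _ _ um (leq_trans (branch_nested_card T_tree uv Tvm mB uB um) le_k)).
have Smv_neq0 : S m v != 0 by rewrite S_sym cov_edge_neq0.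
have := separated_factor um (branch_nested_sep T_tree uv Tvm mB uB um).
move=> factor; apply: contraNneq (mulf_neq0 Sum_neq0 Smv_neq0) => Suv0.
by rewrite factor Suv0 mul0r.
Qed.

Lemma cov_through_nbr z u m x : u != z -> T z m -> m \in branch z u ->
  x \in branch z u -> S x z = S x m * S m z / S m m.
Proof.
move=> uz Tzm mB xB; have Smm := posdef_diag_neq0 S_posdef m.
case: (eqVneq x m) => [-> | xm]; first by rewrite [S m m * _]mulrC mulfK.
by rewrite (separated_factor xm (branch_nested_sep T_tree uz Tzm mB xB xm)) mulfK.
Qed.

Lemma sqr_corr_gt0_lt1 x y : x != y -> 0 < S x y ^+ 2 / (S x x * S y y) < 1.
Proof.
move=> xy; have Sxx_Syy : 0 < S x x * S y y by rewrite mulr_gt0 ?posdef_diag_gt0.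
have Sxy2 : 0 < S x y ^+ 2 by rewrite lt_def sqrf_eq0 cov_neq0 sqr_ge0.
by rewrite divr_gt0 //= ltr_pdivrMr // mul1r posdef_sqr_lt.
Qed.

Lemma cov_branch_factor z u v : u != z -> connect (avoid z) u v ->
  exists2 t, 0 < t < 1 & S u z * S z v = t * (S u v * S z z).
Proof.
have [k] := ubnP #|branch z u|; elim: k => // k IH in z u v *.
rewrite ltnS => le_k uz uv_conn.
case: (branch_nbr T_tree uz) => m Tzm mB.
have Smm := posdef_diag_neq0 S_posdef m; have Szz := posdef_diag_neq0 S_posdef z.
have uB := branch_refl T z u; have vB : v \in branch z u by rewrite inE.
have [t1 /andP[t1_gt0 t1_le1] factor_m] :
    exists2 t1, 0 < t1 <= 1 & S u m * S m v = t1 * (S u v * S m m).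
  case: (eqVneq u m) => [-> | um]; first by exists 1; rewrite ?ltr01 ?lexx // mul1r mulrC.
  have [uv_m | uv_sep] := boolP (connect (avoid m) u v); last first.
    by exists 1; rewrite ?ltr01 ?lexx // mul1r separated_factor.
  have lt_k := leq_trans (branch_nested_card T_tree uz Tzm mB uB um) le_k.
  have [t1 /andP[t1_gt0 /ltW t1_le1] ?] := IH m u v lt_k um uv_m.
  by exists t1; rewrite ?t1_gt0.
have /andP[t0_gt0 t0_lt1] := sqr_corr_gt0_lt1 (ci_graph_neq Tzm : z != m).
exists (t1 * (S z m ^+ 2 / (S z z * S m m))).
  by rewrite mulr_gt0 //= (le_lt_trans _ t0_lt1) // ler_piMl // ltW.
rewrite [S z v]S_sym (cov_through_nbr uz Tzm mB uB) (cov_through_nbr uz Tzm mB vB).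
rewrite [S v m]S_sym [S m z]S_sym.
have -> : S u m * S z m / S m m * (S m v * S z m / S m m) =
    (S u m * S m v) * (S z m ^+ 2 / (S m m * S m m)) by field; rewrite Smm.
by rewrite factor_m; field; rewrite Smm Szz.
Qed.

Lemma indep_givenE z u v : u != z -> indep_given S z u v = ~~ connect (avoid z) u v.
Proof.
move=> uz; rewrite /indep_given.
have [uv_conn | uv_sep] /= := boolP (connect (avoid z) u v).
  have [t /andP[_ t_lt1] ->] := cov_branch_factor uz uv_conn.
  have Suv_Szz : S u v * S z z != 0 by rewrite mulf_neq0 ?cov_neq0.
  by rewrite -[X in _ == X]mul1r (inj_eq (mulIf Suv_Szz)) lt_eqF.
exact/eqP/separated_factor.
Qed.

Lemma cov_factor_ratio z u v : u != z ->
  exists2 t, 0 < t <= 1 & S u z * S z v = t * (S u v * S z z).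
Proof.
move=> uz; have [uv_conn | uv_sep] := boolP (connect (avoid z) u v).
  have [t /andP[t_gt0 /ltW t_le1] ?] := cov_branch_factor uz uv_conn.
  by exists t; rewrite ?t_gt0.
by exists 1; rewrite ?ltr01 ?lexx // mul1r separated_factor.
Qed.

Lemma indep_givenC z u v : indep_given S z u v = indep_given S z v u.
Proof. by rewrite /indep_given mulrC -!(S_sym z) (S_sym v). Qed.

Lemma ci_graphE u v :
  T u v = (u != v) && [forall z, (z != u) && (z != v) ==> ~~ indep_given S z u v].
Proof.
apply/idP/andP => [Tuv | [uv /forallP no_sep]].
  split; first exact: ci_graph_neq.
  apply/forallP => z; apply/implyP => /andP[zu zv].
  rewrite indep_givenE 1?eq_sym // negbK.
  by apply: connect1; rewrite /avoid /= Tuv !(eq_sym _ z) zu zv.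
apply: contraT => nTuv; have [z [zu zv uv_sep]] := nonedge_separated T_tree uv nTuv.
by move: (no_sep z); rewrite zu zv indep_givenE 1?eq_sym // uv_sep.
Qed.

Lemma leaf_indep_given b p : T b p -> (forall y, T b y -> y = p) ->
  forall y, y != b -> y != p -> indep_given S p b y.
Proof.
move=> Tbp leaf_b y yb yp; rewrite indep_givenE ?(ci_graph_neq Tbp) //.
by apply/negP => /(leaf_isolated leaf_b) /eqP; rewrite (negbTE yb).
Qed.

Lemma leaf_not_cut b p : (forall y, T b y -> y = p) -> ~~ cut_vertex S b.
Proof.
move=> leaf_b; apply/existsPn => u; apply/existsPn => v; apply/negP => /and4P[ub vb _].
by rewrite indep_givenE // (leaf_not_separating T_tree leaf_b ub vb).
Qed.

Lemma nbrs_cut z x y : T z x -> T z y -> x != y -> cut_vertex S z.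
Proof.
move=> Tzx Tzy xy; apply/existsP; exists x; apply/existsP; exists y.
have xz : x != z by rewrite eq_sym ci_graph_neq.
have yz : y != z by rewrite eq_sym ci_graph_neq.
by rewrite xz yz xy indep_givenE // nbrs_separated.
Qed.

Lemma not_cut_nbr_uniq b y y' : ~~ cut_vertex S b -> T b y -> T b y' -> y = y'.
Proof. by move=> b_leaf Tby Tby'; apply/eqP; apply: contraNT b_leaf; apply: nbrs_cut. Qed.

Lemma cut_indep_given b q : cut_vertex S b -> q != b ->
  exists y, [/\ y != b, y != q & indep_given S b q y].
Proof.
case/existsP => u /existsP [v /and4P [ub vb _]]; rewrite indep_givenE // => uv_sep qb.
have [qu | qu_sep] := boolP (connect (avoid b) q u).
  have qv_sep : ~~ connect (avoid b) q v.
    apply: contra uv_sep => qv; rewrite connect_avoid_sym // in qu.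
    exact: connect_trans qu qv.
  have vq : v != q by apply: contraNneq qv_sep => ->; rewrite connect0.
  by exists v; rewrite vb vq indep_givenE // eq_sym.
have uq : u != q by apply: contraNneq qu_sep => ->; rewrite connect0.
by exists u; rewrite ub uq indep_givenE // eq_sym.
Qed.

Lemma indep_given_leaf_nbr b p w y : T b p -> (forall y, T b y -> y = p) ->
  w != b -> w != p -> y != b -> y != p ->
  indep_given S w b y = indep_given S w p y.
Proof.
move=> Tbp leaf_b wb wp yb yp.
have /eqP sep_w := leaf_indep_given Tbp leaf_b wb wp.
have /eqP sep_y := leaf_indep_given Tbp leaf_b yb yp.
rewrite /indep_given -(inj_eq (mulIf (posdef_diag_neq0 S_posdef p))).
rewrite -[in RHS](inj_eq (mulfI (cov_neq0 b p))) mulrAC -sep_w [S b y * _ * _]mulrAC -sep_y.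
by rewrite !mulrA.
Qed.

End TreeCov.

Definition nbr (R : realType) (n : nat) (S : 'M[R]_n) x := odflt x [pick y | ci_graph S x y].

Lemma not_cut_indep_given (R : realType) (n : nat) (S : 'M[R]_n) z u v :
  ~~ cut_vertex S z -> u != z -> v != z -> u != v -> indep_given S z u v = false.
Proof.
by move=> /existsPn /(_ u) /existsPn /(_ v) + uz vz uv; rewrite uz vz uv => /negbTE.
Qed.

Lemma not_cut_leaf (R : realType) (n : nat) (S : 'M[R]_n) b u : tree_cov S ->
  ~~ cut_vertex S b -> u != b ->
  ci_graph S b (nbr S b) /\ forall y, ci_graph S b y -> y = nbr S b.
Proof.
move=> S_tree b_leaf ub; have [m Tbm _] := branch_nbr S_tree.2 ub.
have Tb_nbr : ci_graph S b (nbr S b).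
  by rewrite /nbr; case: pickP => [y // | /(_ m)]; rewrite Tbm.
by split=> // y Tby; apply: not_cut_nbr_uniq Tby Tb_nbr.
Qed.

Definition offdiag_eq (R : realType) (n : nat) (S1 S2 : 'M[R]_n) :=
  forall x y, x != y -> S2 x y = S1 x y.

Definition tree_pair (R : realType) (n : nat) (S1 S2 : 'M[R]_n) :=
  [/\ tree_cov S1, tree_cov S2 & offdiag_eq S1 S2].

Lemma tree_pair_sym (R : realType) (n : nat) (S1 S2 : 'M[R]_n) :
  tree_pair S1 S2 -> tree_pair S2 S1.
Proof. by case=> S1_tree S2_tree off; split => // x y xy; rewrite off. Qed.

Definition new_cut (R : realType) (n : nat) (S1 S2 : 'M[R]_n) :=
  [pred b | ~~ cut_vertex S1 b && cut_vertex S2 b].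

Lemma new_cut_leaf (R : realType) (n : nat) (S1 S2 : 'M[R]_n) b :
  tree_cov S1 -> b \in new_cut S1 S2 ->
  ci_graph S1 b (nbr S1 b) /\ forall y, ci_graph S1 b y -> y = nbr S1 b.
Proof.
move=> S1_tree /andP[b_leaf /existsP[u /existsP[v /and4P[ub _ _ _]]]].
exact: not_cut_leaf S1_tree b_leaf ub.
Qed.

Section DiagonalComparison.
Variables (R : realType) (n : nat) (S1 S2 : 'M[R]_n).
Hypothesis pairS : tree_pair S1 S2.
Let S1_tree : tree_cov S1 := let: And3 S1_tree _ _ := pairS in S1_tree.
Let S2_tree : tree_cov S2 := let: And3 _ S2_tree _ := pairS in S2_tree.
Let off : offdiag_eq S1 S2 := let: And3 _ _ off := pairS in off.

Lemma indep_given_offdiag z u v : u != z -> v != z -> u != v ->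
  indep_given S2 z u v = (S1 u z * S1 z v == S1 u v * S2 z z).
Proof. by move=> uz vz uv; rewrite /indep_given off // off 1?eq_sym // off. Qed.

(* [z] separates some [u], [v] in [T1], so [cov_factor_ratio] for [S2] gives
   [S1 z z = t * S2 z z] with [t <= 1]. *)
Lemma cut_diag_le z : cut_vertex S1 z -> S1 z z <= S2 z z.
Proof.
case/existsP => u /existsP[v /and4P[uz vz uv /eqP sep1]].
have [t /andP[t_gt0 t_le1]] := cov_factor_ratio S2_tree v uz.
rewrite off // off 1?eq_sym // off // sep1 mulrCA => /(mulfI (cov_neq0 S1_tree u v)) ->.
by rewrite ler_piMl // ltW // (posdef_diag_gt0 S2_tree.1).
Qed.

End DiagonalComparison.

Section NewCut.
Variables (R : realType) (n : nat) (S1 S2 : 'M[R]_n).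
Hypothesis pairS : tree_pair S1 S2.
Let S1_tree : tree_cov S1 := let: And3 S1_tree _ _ := pairS in S1_tree.
Let S2_tree : tree_cov S2 := let: And3 _ S2_tree _ := pairS in S2_tree.

Lemma cut_diag_eq z : cut_vertex S1 z -> cut_vertex S2 z -> S1 z z = S2 z z.
Proof.
by move=> cut1 cut2; apply/le_anti; rewrite cut_diag_le // (cut_diag_le (tree_pair_sym pairS)).
Qed.

Lemma indep_given_diag_eq z u v : S1 z z = S2 z z -> u != z -> v != z -> u != v ->
  indep_given S2 z u v = indep_given S1 z u v.
Proof. by move=> Szz uz vz uv; rewrite (indep_given_offdiag pairS) // -Szz. Qed.

Lemma new_cut_nbr b : b \in new_cut S1 S2 -> nbr S1 b \in new_cut S2 S1.
Proof.
move=> bB; have [Tbp leaf_b] := new_cut_leaf S1_tree bB.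
case/andP: bB => _ b_cut2; case/existsP: (b_cut2) => u /existsP[v /and4P[ub vb uv _]].
move: (nbr S1 b) Tbp leaf_b => p Tbp leaf_b; have bp := ci_graph_neq Tbp.
have p_sep := leaf_indep_given S1_tree Tbp leaf_b.
have [y yb yp] : exists2 y, y != b & y != p.
  by case: (eqVneq u p) => [up | up]; [exists v; rewrite // -up eq_sym | exists u].
have p_cut1 : cut_vertex S1 p.
  by apply/existsP; exists b; apply/existsP; exists y; rewrite bp yp (eq_sym b) yb p_sep.
rewrite inE /= p_cut1 andbT; apply/negP => p_cut2.
have leaf2_b y' : ci_graph S2 b y' -> y' = p.
  move=> Tby'; apply/eqP; apply: contraT => y'p.
  move: Tby'; rewrite (ci_graphE S2_tree) => /andP[by' /forallP /(_ p)].
  rewrite eq_sym bp eq_sym y'p /= (indep_given_diag_eq (cut_diag_eq p_cut1 p_cut2)) //.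
  by rewrite p_sep // eq_sym.
by rewrite (negbTE (leaf_not_cut S2_tree leaf2_b)) in b_cut2.
Qed.

End NewCut.

Section NewCutNbr.
Variables (R : realType) (n : nat) (S1 S2 : 'M[R]_n).
Hypothesis pairS : tree_pair S1 S2.
Let S1_tree : tree_cov S1 := let: And3 S1_tree _ _ := pairS in S1_tree.
Let S2_tree : tree_cov S2 := let: And3 _ S2_tree _ := pairS in S2_tree.
Let off : offdiag_eq S1 S2 := let: And3 _ _ off := pairS in off.

(* Otherwise [b] and [nbr S2 (nbr S1 b)] would be perfectly correlated in [S2]. *)
Lemma new_cut_nbrK b : b \in new_cut S1 S2 -> nbr S2 (nbr S1 b) = b.
Proof.
move=> bB; have [Tbp leaf_b] := new_cut_leaf S1_tree bB.
have [Tpq leaf_p] := new_cut_leaf S2_tree (new_cut_nbr pairS bB).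
case/andP: bB => _ b_cut2.
move: (nbr S1 b) (nbr S2 _) Tbp leaf_b Tpq leaf_p => p q Tbp leaf_b Tpq leaf_p.
apply/eqP; apply: contraT => qb.
have bp := ci_graph_neq Tbp; have pb : p != b by rewrite eq_sym.
have pq := ci_graph_neq Tpq; have qp : q != p by rewrite eq_sym.
have bq : b != q by rewrite eq_sym.
have [y [yb yp /eqP sep2_b]] := cut_indep_given S2_tree b_cut2 pb.
have /eqP sep1_bq := leaf_indep_given S1_tree Tbp leaf_b qb qp.
have /eqP sep1_by := leaf_indep_given S1_tree Tbp leaf_b yb yp.
have /eqP sep2_q := leaf_indep_given S2_tree Tpq leaf_p bp bq.
rewrite -(off bp) -(off pq) -(off bq) in sep1_bq.
have py : p != y by rewrite eq_sym.
have by' : b != y by rewrite eq_sym.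
rewrite -(off bp) -(off py) -(off by') in sep1_by.
rewrite [S2 q b](posdef_sym S2_tree.1) in sep2_q.
have S1pp := posdef_diag_neq0 S1_tree.1 p; have S2_neq0 := cov_neq0 S2_tree.
have sep_q_y : S2 b q * S2 p y = S2 p q * S2 b y.
  by apply: (mulIf S1pp); rewrite mulrAC -sep1_bq -[RHS]mulrA -sep1_by; ring.
have sep_q_b : S2 b q * S2 p b = S2 p q * S2 b b.
  by apply: (mulIf (S2_neq0 b y)); rewrite -mulrA sep2_b mulrA sep_q_y; ring.
have : S2 b q ^+ 2 = S2 b b * S2 q q.
  apply: (mulIf (S2_neq0 p q)); rewrite expr2 -mulrA [S2 b q * S2 p q]mulrC sep2_q.
  by rewrite mulrA sep_q_b; ring.
by move=> sqr_eq; have := posdef_sqr_lt S2_tree.1 bq; rewrite sqr_eq ltxx.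
Qed.

End NewCutNbr.

Definition leaf_swap (R : realType) (n : nat) (S1 S2 : 'M[R]_n) x :=
  if x \in new_cut S1 S2 then nbr S1 x else if x \in new_cut S2 S1 then nbr S2 x else x.

Section LeafSwap.
Variables (R : realType) (n : nat) (S1 S2 : 'M[R]_n).
Hypothesis pairS : tree_pair S1 S2.
Let S1_tree : tree_cov S1 := let: And3 S1_tree _ _ := pairS in S1_tree.
Let S2_tree : tree_cov S2 := let: And3 _ S2_tree _ := pairS in S2_tree.
Local Notation f := (leaf_swap S1 S2).
Local Notation B := (new_cut S1 S2).
Local Notation A := (new_cut S2 S1).

Lemma new_cut_disjoint x : x \in B -> x \notin A.
Proof. by rewrite !inE => /andP[/negbTE-> _]; rewrite andbF. Qed.

Lemma leaf_swap_new x : x \in B -> f x = nbr S1 x.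
Proof. by rewrite /leaf_swap => ->. Qed.

Lemma leaf_swap_lost x : x \in A -> f x = nbr S2 x.
Proof.
by move=> xA; rewrite /leaf_swap xA; case: ifP => // /new_cut_disjoint; rewrite xA.
Qed.

Lemma leaf_swap_id x : x \notin B -> x \notin A -> f x = x.
Proof. by rewrite /leaf_swap => /negbTE-> /negbTE->. Qed.

Lemma leaf_swap_new_lost x : x \in B -> f x \in A.
Proof. by move=> xB; rewrite leaf_swap_new // new_cut_nbr. Qed.

Lemma leaf_swap_lost_new x : x \in A -> f x \in B.
Proof. by move=> xA; rewrite leaf_swap_lost // (new_cut_nbr (tree_pair_sym pairS)). Qed.

Lemma leaf_swapK : involutive f.
Proof.
move=> x; have [xB | xB] := boolP (x \in B).
  by rewrite leaf_swap_lost ?leaf_swap_new_lost // leaf_swap_new // new_cut_nbrK.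
have [xA | xA] := boolP (x \in A); last by rewrite !leaf_swap_id.
rewrite leaf_swap_new ?leaf_swap_lost_new // leaf_swap_lost //.
exact: (new_cut_nbrK (tree_pair_sym pairS) xA).
Qed.

Lemma leaf_swap_inj : injective f.
Proof. exact: can_inj leaf_swapK. Qed.

Lemma leaf_swap_neq x y : x != y -> f x != f y.
Proof. by rewrite (inj_eq leaf_swap_inj). Qed.

Lemma leaf1_new_cut x : x \in B ->
  ci_graph S1 x (f x) /\ forall y, ci_graph S1 x y -> y = f x.
Proof. by move=> xB; rewrite leaf_swap_new //; apply: new_cut_leaf S1_tree xB. Qed.

Lemma leaf1_swap_lost_cut x : x \in A ->
  ci_graph S1 (f x) x /\ forall y, ci_graph S1 (f x) y -> y = x.
Proof.
by move=> xA; have := leaf1_new_cut (leaf_swap_lost_new xA); rewrite leaf_swapK.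
Qed.

Lemma leaf2_lost_cut x : x \in A ->
  ci_graph S2 x (f x) /\ forall y, ci_graph S2 x y -> y = f x.
Proof. by move=> xA; rewrite leaf_swap_lost //; apply: new_cut_leaf S2_tree xA. Qed.

Lemma indep_given_swap_arg x w y : w != x -> w != f x -> y != x -> y != f x ->
  indep_given S1 w (f x) y = indep_given S1 w x y.
Proof.
move=> wx wfx yx yfx; have [xB | xB] := boolP (x \in B).
  by have [Tx leaf_x] := leaf1_new_cut xB; rewrite (indep_given_leaf_nbr S1_tree Tx).
have [xA | xA] := boolP (x \in A); last by rewrite leaf_swap_id.
by have [Tx leaf_x] := leaf1_swap_lost_cut xA; rewrite (indep_given_leaf_nbr S1_tree Tx).
Qed.

Lemma indep_given_swap_args w u v : w != u -> w != v -> u != v -> f u != w -> f v != w ->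
  indep_given S1 w (f u) (f v) = indep_given S1 w u v.
Proof.
move=> wu wv uv fuw fvw.
have [-> | vfu] := eqVneq v (f u); first by rewrite leaf_swapK (indep_givenC S1_tree).
have fvu : f v != u by apply: contra_neq vfu => <-; rewrite leaf_swapK.
have fvfu : f v != f u by rewrite (inj_eq leaf_swap_inj) eq_sym.
have wfu : w != f u by rewrite eq_sym.
have wfv : w != f v by rewrite eq_sym.
have ufv : u != f v by rewrite eq_sym.
rewrite indep_given_swap_arg // (indep_givenC S1_tree w u).
by rewrite indep_given_swap_arg // (indep_givenC S1_tree).
Qed.

Lemma indep_given_lost_cut x y1 y2 : x \in A ->
  y1 != x -> y1 != f x -> y2 != x -> y2 != f x -> y1 != y2 ->
  indep_given S2 (f x) y1 y2 = indep_given S1 x y1 y2.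
Proof.
move=> xA y1x y1b y2x y2b y12; rewrite (indep_given_offdiag pairS) //.
have [T1bx leaf1_b] := leaf1_swap_lost_cut xA.
have [T2xb leaf2_x] := leaf2_lost_cut xA.
move: (f x) T1bx leaf1_b T2xb leaf2_x y1b y2b => b T1bx leaf1_b T2xb leaf2_x y1b y2b.
have S1sym := posdef_sym S1_tree.1; have xb := ci_graph_neq T2xb.
have Sxx := posdef_diag_neq0 S1_tree.1 x; have Sbb := posdef_diag_neq0 S2_tree.1 b.
have sep1 y : y != b -> y != x -> S1 b y * S1 x x = S1 b x * S1 x y.
  by move=> yb yx; apply/esym/eqP/(leaf_indep_given S1_tree T1bx leaf1_b).
have Sbx2 : S1 b x ^+ 2 = S1 x x * S2 b b.
  have := leaf_indep_given S2_tree T2xb leaf2_x y1x y1b.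
  have xy1 : x != y1 by rewrite eq_sym.
  rewrite (indep_given_offdiag pairS) // => /eqP sep2.
  apply: (mulIf (cov_neq0 S1_tree x y1)).
  transitivity (S1 x b * (S1 b y1 * S1 x x)); first by rewrite sep1 // [S1 x b]S1sym; ring.
  by rewrite mulrA sep2; ring.
rewrite /indep_given -(inj_eq (mulIf (mulf_neq0 Sxx Sxx))).
rewrite -[in RHS](inj_eq (mulfI (mulf_neq0 Sxx Sbb))).
have -> : S1 y1 b * S1 b y2 * (S1 x x * S1 x x) = S1 b x ^+ 2 * (S1 y1 x * S1 x y2).
  transitivity ((S1 b y1 * S1 x x) * (S1 b y2 * S1 x x)); first by rewrite (S1sym y1 b); ring.
  by rewrite !sep1 // (S1sym y1 x); ring.
by rewrite Sbx2; congr (_ == _); ring.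
Qed.

Lemma indep_given_swap_new w u v : w \in B -> w != u -> w != v -> u != v ->
  indep_given S2 (f w) (f u) (f v) = indep_given S1 w u v.
Proof.
move=> wB wu wv uv; have /andP[fw_leaf2 _] := leaf_swap_new_lost wB.
have /andP[w_leaf1 _] := wB; have uw : u != w by rewrite eq_sym.
have vw : v != w by rewrite eq_sym.
by rewrite !not_cut_indep_given // leaf_swap_neq.
Qed.

Lemma indep_given_swap_lost w u v : w \in A -> w != u -> w != v -> u != v ->
  indep_given S2 (f w) (f u) (f v) = indep_given S1 w u v.
Proof.
move=> wA wu wv uv; have [T1 leaf1] := leaf1_swap_lost_cut wA.
have [T2 leaf2] := leaf2_lost_cut wA.
have leaf_sep y : y != f w -> y != w ->
    indep_given S2 (f w) w (f y) /\ indep_given S1 w (f w) y.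
  move=> yfw yw; split; last exact: (leaf_indep_given S1_tree T1 leaf1 yfw yw).
  have fyw : f y != w by apply: contra_neq yfw => <-; rewrite leaf_swapK.
  exact: (leaf_indep_given S2_tree T2 leaf2 fyw (leaf_swap_neq yw)).
have vw : v != w by rewrite eq_sym.
have [u_fw | ufw] := eqVneq u (f w).
  have vfw : v != f w by rewrite -u_fw eq_sym.
  by rewrite u_fw leaf_swapK; have [-> ->] := leaf_sep v vfw vw.
have uw : u != w by rewrite eq_sym.
have [v_fw | vfw] := eqVneq v (f w).
  rewrite (indep_givenC S2_tree) (indep_givenC S1_tree).
  by rewrite v_fw leaf_swapK; have [-> ->] := leaf_sep u ufw uw.
have fuw : f u != w by apply: contra_neq ufw => <-; rewrite leaf_swapK.
have fvw : f v != w by apply: contra_neq vfw => <-; rewrite leaf_swapK.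
rewrite indep_given_lost_cut ?leaf_swap_neq //.
exact: indep_given_swap_args.
Qed.

Lemma indep_given_swap_fixed w u v : w \notin B -> w \notin A ->
  w != u -> w != v -> u != v ->
  indep_given S2 (f w) (f u) (f v) = indep_given S1 w u v.
Proof.
move=> wB wA wu wv uv; have fw := leaf_swap_id wB wA.
have fuw : f u != w by rewrite -fw leaf_swap_neq // eq_sym.
have fvw : f v != w by rewrite -fw leaf_swap_neq // eq_sym.
rewrite fw -indep_given_swap_args //.
have [w_cut1 | w_leaf1] := boolP (cut_vertex S1 w).
  have w_cut2 : cut_vertex S2 w by apply: contraNT wA => w_leaf2; rewrite inE /= w_leaf2.
  by rewrite (indep_given_diag_eq pairS (cut_diag_eq pairS w_cut1 w_cut2)) ?leaf_swap_neq.
have w_leaf2 : ~~ cut_vertex S2 w by apply: contraNN wB => w_cut2; rewrite inE /= w_leaf1.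
by rewrite !not_cut_indep_given ?leaf_swap_neq.
Qed.

Lemma indep_given_leaf_swap w u v : w != u -> w != v -> u != v ->
  indep_given S2 (f w) (f u) (f v) = indep_given S1 w u v.
Proof.
have [wB | wB] := boolP (w \in B); first exact: indep_given_swap_new.
have [wA | wA] := boolP (w \in A); first exact: indep_given_swap_lost.
exact: indep_given_swap_fixed.
Qed.

Lemma ci_graph_leaf_swap u v : ci_graph S2 (f u) (f v) = ci_graph S1 u v.
Proof.
rewrite (ci_graphE S2_tree) (ci_graphE S1_tree) (inj_eq leaf_swap_inj).
have [// | uv /=] := eqVneq u v.
apply/forallP/forallP => sep z; apply/implyP => /andP[zu zv].
  by move: (sep (f z)); rewrite !(inj_eq leaf_swap_inj) zu zv indep_given_leaf_swap.
have fzu : f z != u by apply: contra_neq zu => <-; rewrite leaf_swapK.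
have fzv : f z != v by apply: contra_neq zv => <-; rewrite leaf_swapK.
by move: (sep (f z)); rewrite fzu fzv -indep_given_leaf_swap // leaf_swapK.
Qed.

Lemma new_cut_is_leaf b : b \in B -> is_leaf (ci_graph S1) b.
Proof.
move=> bB; have [Tb leaf_b] := leaf1_new_cut bB.
rewrite /is_leaf (_ : [set y | _] = [set f b]) ?cards1 //.
by apply/setP => y; rewrite !inE; apply/idP/eqP => [/leaf_b | ->].
Qed.

Lemma tree_pair_swap_family : in_swap_family (ci_graph S1) (ci_graph S2).
Proof.
exists [set b | b \in B]; split.
- by move=> a; rewrite inE; apply: new_cut_is_leaf.
- move=> a a' c; rewrite !inE => aB a'B aa' Tac; apply: contra_neqN aa' => Ta'c.
  have [_ leaf_a] := leaf1_new_cut aB; have [_ leaf_a'] := leaf1_new_cut a'B.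
  by apply: leaf_swap_inj; rewrite -(leaf_a _ Tac) -(leaf_a' _ Ta'c).
exists (perm leaf_swap_inj); split.
- move=> a b; rewrite inE => aB Tab; rewrite !permE.
  by have [_ /(_ _ Tab) ->] := leaf1_new_cut aB; rewrite leaf_swapK.
- move=> v; rewrite inE => vB not_nbr; rewrite permE.
  have [vA | vA] := boolP (v \in A); last exact: leaf_swap_id.
  have [T_fv_v _] := leaf1_swap_lost_cut vA.
  have fvB : f v \in [set b | b \in B] by rewrite inE leaf_swap_lost_new.
  by have := not_nbr _ fvB; rewrite T_fv_v.
- by move=> i j; rewrite !permE ci_graph_leaf_swap.
Qed.

End LeafSwap.

Lemma offdiag_eq_diag_shift (R : realType) (n : nat) (S1 D1 S2 D2 : 'M[R]_n) :
  is_diag_mx D1 -> is_diag_mx D2 -> S1 + D1 = S2 + D2 -> offdiag_eq S1 S2.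
Proof.
move=> /is_diag_mxP D1_diag /is_diag_mxP D2_diag eqS x y xy.
have := congr1 (fun M : 'M[R]_n => M x y) eqS; rewrite !mxE.
by rewrite D1_diag // D2_diag // !addr0 => ->.
Qed.

Theorem theorem2 (R : realType) (n : nat)
    (Sstar Dstar S' D' : 'M[R]_n) :
  posdef Sstar -> is_tree (ci_graph Sstar) -> nonneg_diag Dstar ->
  posdef S' -> is_tree (ci_graph S') -> nonneg_diag D' ->
  Sstar + Dstar = S' + D' ->
  in_swap_family (ci_graph Sstar) (ci_graph S').
Proof.
move=> Sstar_pd Tstar [Dstar_diag _] S'_pd T' [D'_diag _] eqS.
apply: tree_pair_swap_family; split => //.
exact: offdiag_eq_diag_shift Dstar_diag D'_diag eqS.
Qed.
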